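(* Let $T>0$ and let $F$ be either the NCV matrix $F=\begin{pmatrix}\mathbf{I}_3 & T\mathbf{I}_3\\ \mathbf{0}_3 & \mathbf{I}_3\end{pmatrix}$ (with $N=6$) or the NCA matrix $F=\begin{pmatrix}\mathbf{I}_3 & T\mathbf{I}_3 & \tfrac{T^2}{2}\mathbf{I}_3\\ \mathbf{0}_3 & \mathbf{I}_3 & T\mathbf{I}_3\\ \mathbf{0}_3&\mathbf{0}_3&\mathbf{I}_3\end{pmatrix}$ (with $N=9$). Let $n$ static sensors be located at $\mathbf{p}_1,\dots,\mathbf{p}_n\in\mathbb{R}^3$ and communicate over a directed graph $\mathcal{G}_W$ on $\{1,\dots,n\}$, with $\mathcal{N}_i=\{j_1,\dots,j_{|\mathcal{N}_i|}\}$ the neighbor set of sensor $i$. Let $W$ be a row-stochastic matrix with $W_{ii}>0$, $W_{ij}>0$ for $j\in\mathcal{N}_i$, and $W_{ij}=0$ otherwise. For each $i$ let $$H_i=\begin{pmatrix}(\mathbf{p}_{j_1}-\mathbf{p}_i)^\top & \mathbf{0}\\ \vdots & \vdots\\ (\mathbf{p}_{j_{|\mathcal{N}_i|}}-\mathbf{p}_i)^\top & \mathbf{0}\end{pmatrix}\in\mathbb{R}^{|\mathcal{N}_i|\times N},$$ i.e. the first three columns contain the relative sensor positions and the remaining $N-3$ columns are zero, and let $D_H=\mathrm{blkdiag}[H_i^\top H_i]$. If $\mathcal{G}_W$ is strongly connected, then the pair $(W\otimes F, D_H)$ is observable (in the structural/generic sense).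
   Context: This is the linear TDOA measurement model: with target state whose first three coordinates are the target position, sensor $i$'s (bias-corrected) measurement is $\mathbf{y}_i(k)=H_i\mathbf{x}(k)+\bm\nu_i(k)$. Observability here is structural: the pair is observable for almost all numerical values of the nonzero entries with their zero/nonzero pattern fixed. A directed graph is strongly connected if there is a directed path from every node to every other node. $\otimes$ is the Kronecker product and $\mathrm{blkdiag}$ the block-diagonal matrix. *)

From HB Require Import structures.
From mathcomp Require Import all_boot all_order all_algebra.
From mathcomp Require Import mpoly.
Set Implicit Arguments. Unset Strict Implicit. Unset Printing Implicit Defensive.
Import Order.TTheory GRing.Theory Num.Theory.
Local Open Scope ring_scope.

Definition idx_split (n N : nat) (k : 'I_(n * N)) : 'I_n * 'I_N :=
  enum_val (cast_ord (esym (mxvec_cast n N)) k).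

Definition kron (R : pzRingType) (n N : nat) (W : 'M[R]_n) (F : 'M[R]_N)
  : 'M[R]_(n * N) :=
  \matrix_(k1, k2) (let: (i, a) := idx_split k1 in let: (j, b) := idx_split k2 in
                     W i j * F a b).

Definition blkdiag (R : pzRingType) (n N : nat) (B : 'I_n -> 'M[R]_N)
  : 'M[R]_(n * N) :=
  \matrix_(k1, k2) (let: (i, a) := idx_split k1 in let: (j, b) := idx_split k2 in
                     if i == j then B i a b else 0).

(* Entry (a,b): with blocks of size 3, block (u,v) is (T^(v-u)/(v-u)!) I_3 for
   u <= v and 0 otherwise. *)
Definition motion_mx (R : fieldType) (nb : nat) (T : R) : 'M[R]_(3 * nb) :=
  \matrix_(a, b)
    (if ((a %% 3)%N == (b %% 3)%N) && ((a %/ 3)%N <= (b %/ 3)%N)%N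
     then T ^+ (b %/ 3 - a %/ 3)%N / ((b %/ 3 - a %/ 3)`!)%:R else 0).

Definition NCV (R : fieldType) (T : R) : 'M[R]_6 := motion_mx 2 T.
Definition NCA (R : fieldType) (T : R) : 'M[R]_9 := motion_mx 3 T.

Definition strongly_connected (n : nat) (e : rel 'I_n) : Prop :=
  forall i j : 'I_n, connect e i j.

Definition nbrs (n : nat) (adj : rel 'I_n) (i : 'I_n) : {set 'I_n} :=
  [set j | adj i j].

Definition consensus_weights (R : numDomainType) (n : nat) (adj : rel 'I_n)
  (W : 'M[R]_n) : Prop :=
  [/\ forall i j, 0 <= W i j,
      forall i, \sum_j W i j = 1,
      forall i, 0 < W i i,
      forall i j, adj i j -> 0 < W i j
    & forall i j, i != j -> ~~ adj i j -> W i j = 0].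

(* H_i : |N_i| x N, row r = ((p_{j_r} - p_i)^T, 0), j_1 < ... < j_|N_i| *)
Definition H_i (S : pzRingType) (n N : nat) (adj : rel 'I_n)
  (p : 'I_n -> 'rV[S]_3) (i : 'I_n) : 'M[S]_(#|nbrs adj i|, N) :=
  \matrix_(r, c) (if (c < 3)%N then (p (enum_val r) - p i) 0 (inord c) else 0).

Definition D_H (S : pzRingType) (n N : nat) (adj : rel 'I_n)
  (p : 'I_n -> 'rV[S]_3) : 'M[S]_(n * N) :=
  blkdiag (fun i => (H_i N adj p i)^T *m H_i N adj p i).

(* symbolic positions: coordinate c of p_j is the indeterminate X_(j,c) *)
Definition sym_pos (R : comNzRingType) (n : nat) (j : 'I_n)
  : 'rV[{mpoly R[n * 3]}]_3 :=
  \row_c 'X_(mxvec_index j c).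

Definition observable (R : pzRingType) (m q : nat) (A : 'M[R]_m) (C : 'M[R]_(q, m))
  : Prop :=
  forall x : 'cV[R]_m, (forall k, C *m (iter k (mulmx A) x) = 0) -> x = 0.

Definition realize (R : pzRingType) (p q : nat) (P : 'M[bool]_(p, q))
  (th : 'M[R]_(p, q)) : 'M[R]_(p, q) :=
  \matrix_(i, j) (if P i j then th i j else 0).

(* Structural observability of the pattern pair (Ap, Cp): the realization is
   observable for almost all parameter values, i.e. outside the zero set of a
   nonzero polynomial in the parameters. *)
Definition struct_observable (R : fieldType) (m q : nat)
  (Ap : 'M[bool]_m) (Cp : 'M[bool]_(q, m)) : Prop :=
  exists P : {mpoly R[m * m + q * m]}, P != 0 /\
    forall u : 'rV[R]_(m * m + q * m),
      P.@[fun k => u 0 k] != 0 ->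
      observable (realize Ap (vec_mx (lsubmx u))) (realize Cp (vec_mx (rsubmx u))).

Definition pattern (R : pzRingType) (p q : nat) (M : 'M[R]_(p, q)) : 'M[bool]_(p, q) :=
  \matrix_(i, j) (M i j != 0).

From HB Require Import structures.
From mathcomp Require Import all_boot all_order all_algebra.
From mathcomp Require Import mpoly.
From mathcomp Require Import zify.
Import Order.TTheory GRing.Theory Num.Theory.
Local Open Scope ring_scope.
Set Implicit Arguments. Unset Strict Implicit. Unset Printing Implicit Defensive.

(* It suffices to exhibit one realization of the two patterns at which
   [sum_k L_k C A^k] is invertible for some fixed matrices [L_k]: the
   determinant of this sum at generic parameters is then a polynomial that is
   nonzero there, and wherever it does not vanish the realization is
   observable.  Since [W_ii > 0], the pattern of [W (x) F] contains
   [I (x) S], where [S] shifts by one block of three coordinates (the entries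
   [T] of the superdiagonal blocks of [F]).  Strong connectivity gives every
   sensor a neighbour, so the position entries on the diagonal of
   [H_i^T H_i] are nonzero polynomials and the pattern of [D_H] contains
   [I (x) P], with [P] the projection on the three position coordinates.
   Finally [sum_k (S^k)^T P S^k = I]. *)

Lemma sum_ord_delta (R : pzSemiRingType) N x (f : nat -> R) :
  \sum_(c < N) ((c : nat) == x)%:R * f c = (x < N)%:R * f x.
Proof.
case: (ltnP x N) => [xN|Nx].
  rewrite (bigD1 (Ordinal xN)) //= eqxx big1 ?addr0 // => c.
  by rewrite -val_eqE /= => /negbTE->; rewrite mul0r.
rewrite mul0r big1 // => c _.
by rewrite ltn_eqF ?mul0r // (leq_trans _ Nx).
Qed.

Definition mxpow (R : pzRingType) m (A : 'M[R]_m) k := iter k (mulmx A) 1%:M.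

Lemma iter_mulmx (R : pzRingType) m (A : 'M[R]_m) k (x : 'cV_m) :
  iter k (mulmx A) x = mxpow A k *m x.
Proof. by elim: k => [|k IHk] /=; rewrite ?mul1mx // IHk mulmxA. Qed.

Lemma map_mxpow (R S : pzRingType) (f : {rmorphism R -> S}) m (A : 'M[R]_m) k :
  map_mx f (mxpow A k) = mxpow (map_mx f A) k.
Proof. by elim: k => [|k IHk] /=; rewrite ?map_mx1 // map_mxM -IHk. Qed.

Definition obs_sum (R : pzRingType) m q K (L : 'I_K -> 'M[R]_(m, q))
    (C : 'M[R]_(q, m)) (A : 'M[R]_m) : 'M[R]_m :=
  \sum_(k < K) L k *m C *m mxpow A k.

Lemma obs_sum_unit_observable (R : fieldType) m q K (L : 'I_K -> 'M[R]_(m, q)) C A :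
  obs_sum L C A \in unitmx -> observable A C.
Proof.
move=> sum_unit x Cx0; rewrite -(mulKmx sum_unit x).
suff -> : obs_sum L C A *m x = 0 by rewrite mulmx0.
by rewrite mulmx_suml big1 // => k _; rewrite -!mulmxA -iter_mulmx Cx0 mulmx0.
Qed.

Lemma map_obs_sum (R S : pzRingType) (f : {rmorphism R -> S}) m q K
    (L : 'I_K -> 'M[R]_(m, q)) C A :
  map_mx f (obs_sum L C A) = obs_sum (fun k => map_mx f (L k)) (map_mx f C) (map_mx f A).
Proof.
by rewrite /obs_sum map_mx_sum; apply: eq_bigr => k _; rewrite !map_mxM map_mxpow.
Qed.

Lemma map_realize (R S : pzRingType) (f : {rmorphism R -> S}) p q
    (P : 'M[bool]_(p, q)) th :
  map_mx f (realize P th) = realize P (map_mx f th).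
Proof. by apply/matrixP => i j; rewrite !mxE; case: (P i j); rewrite ?rmorph0. Qed.

Lemma realize_id (R : pzRingType) p q (P : 'M[bool]_(p, q)) (M : 'M[R]_(p, q)) :
  (forall i j, M i j != 0 -> P i j) -> realize P M = M.
Proof.
move=> PM; apply/matrixP => i j; rewrite mxE.
by case: (eqVneq (M i j) 0) => [->|/PM->]; case: (P i j).
Qed.

Lemma struct_observable_witness (R : fieldType) m q K (Ap : 'M[bool]_m)
    (Cp : 'M[bool]_(q, m)) (L : 'I_K -> 'M[R]_(m, q))
    (A0 : 'M[R]_m) (C0 : 'M[R]_(q, m)) :
  (forall i j, A0 i j != 0 -> Ap i j) -> (forall i j, C0 i j != 0 -> Cp i j) ->
  \det (obs_sum L C0 A0) != 0 -> struct_observable R Ap Cp.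
Proof.
move=> A0p C0p detA0C0.
pose V := (m * m + q * m)%N.
pose U : 'rV[{mpoly R[V]}]_V := \row_k 'X_k.
pose P := \det (obs_sum (fun k => map_mx (fun c => c%:MP_[V]) (L k))
                  (realize Cp (vec_mx (rsubmx U))) (realize Ap (vec_mx (lsubmx U)))).
have mevalP (u : 'rV[R]_V) : P.@[fun k => u 0 k] =
    \det (obs_sum L (realize Cp (vec_mx (rsubmx u))) (realize Ap (vec_mx (lsubmx u)))).
  have evalU : map_mx (meval (fun k => u 0 k)) U = u.
    by apply/matrixP => i j; rewrite !mxE ord1 mevalXU.
  rewrite -det_map_mx map_obs_sum !map_realize !map_vec_mx map_lsubmx map_rsubmx evalU.
  congr (\det _); apply: eq_bigr => k _; congr (_ *m _ *m _).
  by apply/matrixP => i j; rewrite !mxE; exact: mevalC.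
exists P; split.
  apply: contra detA0C0 => /eqP P0.
  have := mevalP (row_mx (mxvec A0) (mxvec C0)).
  by rewrite P0 meval0 row_mxKl row_mxKr !mxvecK !realize_id // => <-.
move=> u; rewrite mevalP => detu.
by apply: (obs_sum_unit_observable (L := L)); rewrite unitmxE unitfE.
Qed.

Section IndexSplit.

Variables n N : nat.

Lemma idx_splitK (i : 'I_n) (a : 'I_N) : idx_split (mxvec_index i a) = (i, a).
Proof. by rewrite /idx_split /mxvec_index cast_ordK enum_rankK. Qed.

Lemma idx_splitKV (k : 'I_(n * N)) : mxvec_index (idx_split k).1 (idx_split k).2 = k.
Proof. by rewrite /idx_split /mxvec_index -surjective_pairing enum_valK cast_ordKV. Qed.

Lemma idx_split_inj : injective (@idx_split n N).
Proof. by move=> k1 k2 eq12; rewrite -[k1]idx_splitKV -[k2]idx_splitKV eq12. Qed.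

Lemma big_idx_split (V : nmodType) (f : 'I_n -> 'I_N -> V) :
  \sum_(k < n * N) f (idx_split k).1 (idx_split k).2 = \sum_i \sum_a f i a.
Proof.
rewrite pair_bigA (reindex (fun ia : 'I_n * 'I_N => mxvec_index ia.1 ia.2)) /=.
  by apply: eq_bigr => -[i a] _; rewrite idx_splitK.
by exists (@idx_split n N) => [[i a]|k] _; rewrite ?idx_splitK ?idx_splitKV.
Qed.

End IndexSplit.

Section Kronecker.

Variables (R : pzRingType) (n N : nat).
Implicit Types (W : 'M[R]_n) (F : 'M[R]_N).

Lemma kronE W F k1 k2 :
  kron W F k1 k2 = W (idx_split k1).1 (idx_split k2).1 * F (idx_split k1).2 (idx_split k2).2.
Proof. by rewrite mxE; case: (idx_split k1) => i a; case: (idx_split k2). Qed.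

Lemma blkdiagE (B : 'I_n -> 'M[R]_N) k1 k2 :
  blkdiag B k1 k2 = if (idx_split k1).1 == (idx_split k2).1 then
     B (idx_split k1).1 (idx_split k1).2 (idx_split k2).2 else 0.
Proof. by rewrite mxE; case: (idx_split k1) => i a; case: (idx_split k2). Qed.

Lemma kron1 : kron (1%:M : 'M[R]_n) (1%:M : 'M[R]_N) = 1%:M.
Proof.
apply/matrixP => k1 k2; rewrite kronE !mxE -(inj_eq (@idx_split_inj n N)).
case: (idx_split k1) => i a; case: (idx_split k2) => j b /=.
by rewrite xpair_eqE; case: (i == j); case: (a == b); rewrite ?mulr1 ?mulr0.
Qed.

Lemma kron_sumr W K (F : 'I_K -> 'M[R]_N) :
  kron W (\sum_(k < K) F k) = \sum_(k < K) kron W (F k).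
Proof.
apply/matrixP => k1 k2; rewrite kronE !summxE mulr_sumr.
by apply: eq_bigr => k _; rewrite kronE.
Qed.

End Kronecker.

Lemma mul_kron (R : comPzRingType) n N (W1 W2 : 'M[R]_n) (F1 F2 : 'M[R]_N) :
  kron W1 F1 *m kron W2 F2 = kron (W1 *m W2) (F1 *m F2).
Proof.
apply/matrixP => k1 k2; rewrite [RHS]kronE !mxE.
under eq_bigr do rewrite !kronE.
rewrite (big_idx_split (fun i a => W1 (idx_split k1).1 i * F1 (idx_split k1).2 a *
   (W2 i (idx_split k2).1 * F2 a (idx_split k2).2))).
rewrite big_distrlr /=; apply: eq_bigr => i _; apply: eq_bigr => a _.
by rewrite mulrACA.
Qed.

Lemma mxpow_kron1 (R : comPzRingType) n N (F : 'M[R]_N) k :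
  mxpow (kron (1%:M : 'M[R]_n) F) k = kron 1%:M (mxpow F k).
Proof. by elim: k => [|k IHk] /=; rewrite ?kron1 // -/(mxpow _ k) IHk mul_kron mul1mx. Qed.

Lemma eq_divn_modn a c k d : (0 < d)%N ->
  (a == c + k * d)%N && (c < d)%N = (c == a %% d)%N && (k == a %/ d)%N.
Proof.
move=> d_gt0; apply/idP/idP => [/andP[/eqP-> cd]|/andP[/eqP-> /eqP->]].
  by rewrite addnC modnMDl modn_small // divnMDl // divn_small // addn0 !eqxx.
by rewrite addnC -divn_eq ltn_pmod // eqxx.
Qed.

Definition shift_mx (R : pzRingType) d N : 'M[R]_N :=
  \matrix_(a, b) ((b : nat) == a + d)%N%:R.

Definition head_proj (R : pzRingType) d N : 'M[R]_N :=
  diag_mx (\row_(a < N) (a < d)%N%:R).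

Section Shift.

Variables (R : pzRingType) (d : nat).
Hypothesis d_gt0 : (0 < d)%N.

Lemma mxpow_shift_mxE N k (a b : 'I_N) :
  mxpow (shift_mx R d N) k a b = ((b : nat) == a + k * d)%N%:R.
Proof.
elim: k a b => [|k IHk] a b /=; first by rewrite mxE mul0n addn0 -val_eqE eq_sym.
rewrite -/(mxpow _ k) mxE; under eq_bigr do rewrite mxE IHk.
rewrite (sum_ord_delta _ _ (fun c => ((b : nat) == c + k * d)%N%:R)) -addnA -mulSn.
case: (ltnP (a + d) N) => [|Nad]; rewrite ?mul1r // mul0r ltn_eqF //.
by apply: leq_trans (ltn_ord b) (leq_trans Nad _); rewrite mulSn addnA leq_addr.
Qed.

Lemma shift_gramE N k (a b : 'I_N) :
  ((mxpow (shift_mx R d N) k)^T *m head_proj R d N *m mxpow (shift_mx R d N) k) a b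
  = ((a == b) && (k == a %/ d))%N%:R.
Proof.
have summandE (c : 'I_N) :
    ((a : nat) == c + k * d)%N%:R * ((c < d)%N%:R * ((b : nat) == c + k * d)%N%:R)
    = ((c : nat) == a %% d)%N%:R * ((a == b) && (k == a %/ d))%N%:R :> R.
  rewrite -!natrM !mulnb andbA eq_divn_modn //.
  case: (c =P (a %% d)%N :> nat) => //= ->.
  case: (k =P (a %/ d)%N) => [->|]; rewrite ?andbF //=.
  by rewrite andbT addnC -divn_eq val_eqE eq_sym.
rewrite -mulmxA mxE; under eq_bigr do rewrite mul_diag_mx !mxE !mxpow_shift_mxE summandE.
by rewrite (sum_ord_delta _ _ (fun=> _)) (leq_ltn_trans (leq_mod a d)) ?mul1r.
Qed.

Lemma sum_shift_gram nb :
  \sum_(k < nb) (mxpow (shift_mx R d (d * nb)) k)^T *m head_proj R d (d * nb)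
                   *m mxpow (shift_mx R d (d * nb)) k = 1%:M.
Proof.
apply/matrixP => a b; rewrite summxE.
under eq_bigr do rewrite shift_gramE andbC -mulnb natrM.
by rewrite (sum_ord_delta _ _ (fun=> _)) ltn_divLR // -(mulnC d) ltn_ord mul1r mxE.
Qed.

End Shift.

Lemma kron1_support (R : idomainType) n N (W : 'M[R]_n) (F F0 : 'M[R]_N) k1 k2 :
  (forall i, W i i != 0) -> (forall a b, F0 a b != 0 -> F a b != 0) ->
  kron 1%:M F0 k1 k2 != 0 -> kron W F k1 k2 != 0.
Proof.
move=> Wii FF0; rewrite !kronE mxE.
case: (idx_split k1) => i a; case: (idx_split k2) => j b /=.
case: (eqVneq i j) => [<-|_]; last by rewrite mul0r eqxx.
by rewrite mul1r => /FF0; apply: mulf_neq0.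
Qed.

Lemma kron1_blkdiag_support (R S : pzRingType) n N (C0 : 'M[R]_N) (B : 'I_n -> 'M[S]_N) k1 k2 :
  (forall i a b, C0 a b != 0 -> B i a b != 0) ->
  kron 1%:M C0 k1 k2 != 0 -> blkdiag B k1 k2 != 0.
Proof.
move=> BC0; rewrite kronE blkdiagE mxE.
case: (idx_split k1) => i a; case: (idx_split k2) => j b /=.
case: (eqVneq i j) => _; last by rewrite mul0r !eqxx.
by rewrite mul1r => /BC0.
Qed.

Lemma motion_mx_superdiag (R : fieldType) nb (T : R) (a b : 'I_(3 * nb)) :
  (b : nat) = (a + 3)%N -> motion_mx nb T a b = T.
Proof.
move=> bE; rewrite mxE bE.
have -> : ((a %% 3 == (a + 3) %% 3) && (a %/ 3 <= (a + 3) %/ 3))%N.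
  by apply/andP; split; [apply/eqP|]; lia.
have -> : ((a + 3) %/ 3 - a %/ 3 = 1)%N by lia.
by rewrite expr1 divr1.
Qed.

(* Evaluating the coordinates of [p_j] at 1 and all other coordinates at 0
   turns the diagonal entry, a sum of squared differences over the neighbours
   of [i], into 1. *)
Lemma sym_gram_diag_neq0 (R : comNzRingType) n N (adj : rel 'I_n) (i j : 'I_n) (a : 'I_N) :
  j != i -> adj i j -> (a < 3)%N ->
  ((H_i N adj (@sym_pos R n) i)^T *m H_i N adj (@sym_pos R n) i) a a != 0.
Proof.
move=> ji adj_ij a3; pose v (k : 'I_(n * 3)) : R := (j == (idx_split k).1)%:R.
have mevalX k : (meval v : {rmorphism {mpoly R[n * 3]} -> R}) 'X_k = v k by exact: mevalXU.
have nbr_j : j \in nbrs adj i by rewrite inE.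
apply: contra_neq (@oner_neq0 R) => /(congr1 (meval v)); rewrite meval0 => <-.
rewrite mxE rmorph_sum (bigD1 (enum_rank_in nbr_j j)) //= big1 => [|r r_j].
  rewrite !mxE a3 enum_rankK_in // rmorphM rmorphB !mevalX /v !idx_splitK /=.
  by rewrite (negbTE ji) eqxx subr0 mulr1 addr0.
rewrite !mxE a3 rmorphM rmorphB !mevalX /v !idx_splitK /= (negbTE ji).
rewrite (_ : j == enum_val r = false) ?subr0 ?mul0r //.
apply: contraNF r_j => /eqP jr.
by rewrite -[r](enum_valK_in nbr_j) -jr.
Qed.

Lemma struct_observable_motion (R : fieldType) (T : R) n nb (adj : rel 'I_n)
    (W : 'M[R]_n) :
  T != 0 -> (forall i, W i i != 0) -> (forall i, exists2 j, j != i & adj i j) ->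
  struct_observable R (pattern (kron W (motion_mx nb T)))
    (pattern (D_H (3 * nb) adj (@sym_pos R n))).
Proof.
move=> T0 Wii nbr; pose S := shift_mx R 3 (3 * nb).
apply: (struct_observable_witness (L := fun k : 'I_nb => kron 1%:M (mxpow S k)^T)
          (A0 := kron 1%:M S) (C0 := kron 1%:M (head_proj R 3 (3 * nb)))).
- move=> k1 k2 nz; rewrite mxE; apply: (kron1_support Wii _ nz) => a b.
  rewrite mxE; case: (eqVneq (b : nat) (a + 3)%N) => [/motion_mx_superdiag->|_] //.
  by rewrite mulr0n eqxx.
- move=> k1 k2 nz; rewrite mxE /D_H; apply: (kron1_blkdiag_support _ nz) => i a b.
  rewrite [head_proj _ _ _ _ _]mxE mxE.
  case: (eqVneq a b) => [<-|_]; last by rewrite mulr0n eqxx.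
  case: (ltnP a 3) => [a3 _|]; last by rewrite mulr1n eqxx.
  by have [j ji adj_ij] := nbr i; apply: sym_gram_diag_neq0 ji adj_ij a3.
- rewrite /obs_sum (eq_bigr (fun k : 'I_nb => kron 1%:M
      ((mxpow S k)^T *m head_proj R 3 (3 * nb) *m mxpow S k))) => [|k _].
    by rewrite -kron_sumr sum_shift_gram // kron1 det1 oner_neq0.
  by rewrite mxpow_kron1 !mul_kron !mul1mx.
Qed.

Lemma strongly_connected_out_nbr n (adj : rel 'I_n) :
  (1 < n)%N -> irreflexive adj -> strongly_connected adj ->
  forall i, exists2 j, j != i & adj i j.
Proof.
move=> n_gt1 irr conn i.
have [k ki] : exists k, k != i.
  pose o0 := Ordinal (ltnW n_gt1); pose o1 := Ordinal n_gt1.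
  by case: (eqVneq o0 i) => [<-|]; [exists o1|exists o0].
have /connectP[[|j p] /=] := conn i k; first by move=> _ ki'; rewrite ki' eqxx in ki.
case/andP=> adj_ij _ _; exists j => //.
by apply: contraTneq adj_ij => ->; rewrite irr.
Qed.

Unset Implicit Arguments.

Theorem theorem1 (R : realFieldType) (T : R) (n : nat) (adj : rel 'I_n)
    (W : 'M[R]_n) :
  0 < T -> (1 < n)%N ->
  irreflexive adj ->
  consensus_weights adj W ->
  strongly_connected adj ->
  struct_observable R (pattern (kron W (NCV T)))
    (pattern (D_H 6 adj (@sym_pos R n)))
  /\
  struct_observable R (pattern (kron W (NCA T)))
    (pattern (D_H 9 adj (@sym_pos R n))).
Proof.
move=> T_gt0 n_gt1 irr [_ _ W_gt0 _ _] conn.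
have T0 : T != 0 := lt0r_neq0 T_gt0.
have Wii i : W i i != 0 := lt0r_neq0 (W_gt0 i).
have nbr := strongly_connected_out_nbr n_gt1 irr conn.
by split; [apply: (struct_observable_motion 2) | apply: (struct_observable_motion 3)].
Qed.
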